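(* Let $f=a_dx^d+\dots+a_0\in\mathbb Z[x]$ be the associated polynomial of a cyclic expansive automorphism of a compact connected abelian group, assumed irreducible, and let $\beta$ be a root of $f$. Then $f$ is monic up to a sign (i.e. $a_d=\pm1$) if and only if all unstable prime divisors of $\mathbb Q(\beta)$ are archimedean.
   Context: The associated polynomial is primitive with $a_0\ne0$, $a_d>0$, and hyperbolic. A prime divisor (place) $P$ of $\mathbb Q(\beta)$ is unstable if $\beta^n\to0$ as $n\to-\infty$ in the $P$-topology. *)

From HB Require Import structures.
From mathcomp Require Import all_boot all_order all_algebra all_field.
Set Implicit Arguments. Unset Strict Implicit. Unset Printing Implicit Defensive.
Import Order.TTheory GRing.Theory Num.Theory.
Local Open Scope ring_scope.

(* A place
   (prime divisor) of K is an equivalence class of nontrivial absolute values;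
   every class contains such a representative satisfying the triangle
   inequality, and the notions "unstable" and "archimedean" below are class
   invariants, so quantifying over absolute values = quantifying over places. *)
Definition is_absval (K : fieldType) (R : realFieldType) (v : K -> R) : Prop :=
  [/\ forall x, 0 <= v x,
      forall x, v x = 0 <-> x = 0,
      forall x y, v (x * y) = v x * v y,
      forall x y, v (x + y) <= v x + v y
    & exists x, x != 0 /\ v x != 1 ].

Definition nonarchimedean (K : fieldType) (R : realFieldType) (v : K -> R) : Prop :=
  forall x y, v (x + y) <= Num.max (v x) (v y).

Definition archimedean_place (K : fieldType) (R : realFieldType) (v : K -> R) : Prop :=
  ~ nonarchimedean v.

(* P is unstable for b: b^n -> 0 as n -> -oo in the topology of v,
   i.e. v (b^-m) -> 0 as m -> +oo (m natural). *)
Definition unstable (K : fieldType) (R : realFieldType) (v : K -> R) (b : K) : Prop :=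
  forall e : R, 0 < e -> exists N : nat, forall m : nat, (N <= m)%N -> v (b ^- m) < e.

Definition hyperbolic (f : {poly int}) : Prop :=
  forall z : algC, root (map_poly (fun a : int => a%:~R) f) z -> `|z| != 1.

(* Standing assumptions on the associated polynomial of a cyclic expansive
   automorphism of a compact connected abelian group. *)
Definition associated_poly (f : {poly int}) : Prop :=
  [/\ zcontents f = 1,
      f`_0 != 0,
      0 < lead_coef f
    & hyperbolic f].

From HB Require Import structures.
From mathcomp Require Import all_boot all_order all_algebra all_field.
From mathcomp Require Import boolp classical_sets.
From mathcomp Require Import zify ring.
Import Order.TTheory GRing.Theory Num.Theory.
Set Implicit Arguments. Unset Strict Implicit. Unset Printing Implicit Defensive.
Local Open Scope classical_set_scope.
Local Open Scope ring_scope.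

(* If a_d = +-1 then beta is integral over Z, so |beta|_v <= 1 at every
   non-archimedean place v, whereas instability at v forces |beta|_v > 1.

   Conversely, let p be a prime dividing a_d.  In Z[1/beta] the ideal
   generated by p and 1/beta is proper: q(1/beta) = 1 with p | q(0) would make
   f divide X^n q(1/X) - X^n, whose leading coefficient q(0) - 1 is prime to p.
   By Chevalley's extension theorem (Zorn's lemma on subring/ideal pairs) this
   pair is dominated by a valuation ring B with maximal ideal M.  As K is a
   finite extension of Q, every x <> 0 satisfies x^D = p^e u with u a unit of B
   and D = [K:Q]!, and x |-> 2^-e is a non-archimedean absolute value for which
   |1/beta| < 1, i.e. beta is unstable at a non-archimedean place. *)

Definition rev_poly (R : nzRingType) (n : nat) (q : {poly R}) : {poly R} :=
  \poly_(i < n.+1) q`_(n - i).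

Lemma coef_rev_poly (R : nzRingType) n (q : {poly R}) i :
  (rev_poly n q)`_i = if (i <= n)%N then q`_(n - i) else 0.
Proof. by rewrite coef_poly ltnS. Qed.

Lemma map_rev_poly (R S : nzRingType) (f : {rmorphism R -> S}) n (q : {poly R}) :
  map_poly f (rev_poly n q) = rev_poly n (map_poly f q).
Proof.
apply/polyP => i; rewrite coef_map !coef_rev_poly coef_map.
by case: (i <= n)%N => //; exact: rmorph0.
Qed.

Lemma horner_rev_poly (K : fieldType) n (q : {poly K}) y :
  y != 0 -> (size q <= n.+1)%N -> (rev_poly n q).[y] = y ^+ n * q.[y^-1].
Proof.
move=> y0 sq; rewrite horner_poly (horner_coef_wide _ sq) mulr_sumr.
rewrite (reindex_inj rev_ord_inj); apply: eq_bigr => i _ /=.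
have lin : (i <= n)%N by rewrite -ltnS.
rewrite subSS subKn // mulrCA; congr (_ * _).
by rewrite -[in y ^+ n](subnK lin) exprD exprVn mulfK // expf_neq0.
Qed.

Section SubringIdeal.
Variable K : fieldType.
Implicit Types (B M : set K) (x y : K) (q : {poly K}).

Record subring_ideal B M : Prop := SubringIdeal {
  subring1 : B 1;
  subringD : forall x y, B x -> B y -> B (x + y);
  subringN : forall x, B x -> B (- x);
  subringM : forall x y, B x -> B y -> B (x * y);
  ideal_sub : forall x, M x -> B x;
  ideal0 : M 0;
  idealD : forall x y, M x -> M y -> M (x + y);
  idealMl : forall x y, B x -> M y -> M (x * y);
  ideal_proper : ~ M 1 }.

Definition coef_in (S : set K) q := forall i, S q`_i.

Section Closure.
Variables (B M : set K) (sBM : subring_ideal B M).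

Lemma subring0 : B 0. Proof. exact: (ideal_sub sBM (ideal0 sBM)). Qed.

Lemma subringB x y : B x -> B y -> B (x - y).
Proof. by move=> Bx By; apply: (subringD sBM) => //; apply: (subringN sBM). Qed.

Lemma subringX x n : B x -> B (x ^+ n).
Proof.
move=> Bx; elim: n => [|n IHn]; first exact: subring1 sBM.
by rewrite exprS; apply: (subringM sBM).
Qed.

Lemma subring_nat n : B n%:R.
Proof.
elim: n => [|n IHn]; first exact: subring0.
by rewrite -addn1 natrD; apply: (subringD sBM) => //; apply: subring1 sBM.
Qed.

Lemma idealMr x y : M x -> B y -> M (x * y).
Proof. by move=> Mx By; rewrite mulrC; apply: (idealMl sBM). Qed.

Lemma idealN x : M x -> M (- x).
Proof.
by move=> Mx; rewrite -mulN1r; apply: (idealMl sBM) => //; apply/(subringN sBM)/(subring1 sBM).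
Qed.

Lemma idealB x y : M x -> M y -> M (x - y).
Proof. by move=> Mx My; apply: (idealD sBM) => //; apply: idealN. Qed.

Lemma ideal_sum (I : Type) (r : seq I) (P : pred I) (F : I -> K) :
  (forall i, P i -> M (F i)) -> M (\sum_(i <- r | P i) F i).
Proof. by apply: big_ind; [apply: ideal0 sBM | apply: idealD sBM]. Qed.

Lemma ideal_horner q z : coef_in M q -> B z -> M q.[z].
Proof.
move=> Mq Bz; rewrite horner_coef; apply: ideal_sum => i _.
by apply: idealMr => //; apply: subringX.
Qed.

Lemma ideal_neq1 x : M x -> x != 1.
Proof. by move=> Mx; apply: contra_not_neq (ideal_proper sBM) => <-. Qed.

Lemma idealXB1 z n : B z -> M (z - 1) -> M (z ^+ n - 1).
Proof.
move=> Bz Mz1; elim: n => [|n IHn]; first by rewrite subrr; apply: ideal0 sBM.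
have -> : z ^+ n.+1 - 1 = z * (z ^+ n - 1) + (z - 1) by rewrite exprS; ring.
by apply: (idealD sBM) => //; apply: (idealMl sBM).
Qed.

Lemma coef_inC (S : set K) c : S 0 -> S c -> coef_in S c%:P.
Proof. by move=> S0 Sc i; rewrite coefC; case: eqP. Qed.

Lemma coef_in_subringM q1 q2 : coef_in B q1 -> coef_in B q2 -> coef_in B (q1 * q2).
Proof.
move=> Bq1 Bq2 i; rewrite coefM.
apply: big_ind => [||j _]; [exact: subring0 | exact: subringD sBM | ].
by move: (subringM sBM (Bq1 j) (Bq2 (i - j)%N)).
Qed.

Lemma coef_in_idealM q1 q2 : coef_in B q1 -> coef_in M q2 -> coef_in M (q1 * q2).
Proof. by move=> Bq1 Mq2 i; rewrite coefM; apply: ideal_sum => j _; apply: (idealMl sBM). Qed.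

Lemma coef_in_rev_poly (S : set K) n q : S 0 -> coef_in S q -> coef_in S (rev_poly n q).
Proof. by move=> S0 Sq i; rewrite coef_rev_poly; case: leqP. Qed.

End Closure.

Section Adjoin.
Variables (B M : set K) (sBM : subring_ideal B M) (y : K).

Definition adjoin_subring : set K := [set x | exists2 q, coef_in B q & x = q.[y]].
Definition adjoin_ideal : set K := [set x | exists2 q, coef_in M q & x = q.[y]].

Lemma subring_ideal_adjoin :
  (forall q, coef_in M q -> q.[y] != 1) -> subring_ideal adjoin_subring adjoin_ideal.
Proof.
move=> My_proper; have B0 := subring0 sBM; have M0 := ideal0 sBM.
split.
- by exists 1; [apply: coef_inC; last exact: subring1 sBM | rewrite hornerC].
- move=> _ _ [q1 Bq1 ->] [q2 Bq2 ->]; exists (q1 + q2); last by rewrite hornerD.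
  by move=> i; rewrite coefD; apply: (subringD sBM).
- move=> _ [q Bq ->]; exists (- q); last by rewrite hornerN.
  by move=> i; rewrite coefN; apply: (subringN sBM).
- move=> _ _ [q1 Bq1 ->] [q2 Bq2 ->]; exists (q1 * q2); last by rewrite hornerM.
  by move: (coef_in_subringM sBM Bq1 Bq2).
- by move=> _ [q Mq ->]; exists q => // i; apply: (ideal_sub sBM).
- by exists 0; [move=> i; rewrite coef0 | rewrite horner0].
- move=> _ _ [q1 Mq1 ->] [q2 Mq2 ->]; exists (q1 + q2); last by rewrite hornerD.
  by move=> i; rewrite coefD; apply: (idealD sBM).
- move=> _ _ [q1 Bq1 ->] [q2 Mq2 ->]; exists (q1 * q2); last by rewrite hornerM.
  by move: (coef_in_idealM sBM Bq1 Mq2).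
- by move=> [q Mq /esym/eqP]; apply/negP/My_proper.
Qed.

Lemma subring_sub_adjoin : B `<=` adjoin_subring.
Proof. by move=> x Bx; exists x%:P; [apply: coef_inC (subring0 sBM) Bx | rewrite hornerC]. Qed.

Lemma ideal_sub_adjoin : M `<=` adjoin_ideal.
Proof. by move=> x Mx; exists x%:P; [apply: coef_inC (ideal0 sBM) Mx | rewrite hornerC]. Qed.

Lemma adjoin_subring_gen : adjoin_subring y.
Proof.
exists 'X; last by rewrite hornerX.
by move=> i; rewrite coefX; case: eqP => _; [apply: subring1 sBM | apply: subring0 sBM].
Qed.

End Adjoin.

Definition maximal_subring_ideal B M := subring_ideal B M /\
  forall B' M', subring_ideal B' M' -> B `<=` B' -> M `<=` M' -> B' `<=` B /\ M' `<=` M.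

Lemma subring_ideal_bigcup (C : set (set K * set K)) :
    C !=set0 -> (forall s, C s -> subring_ideal s.1 s.2) ->
    (forall s t, C s -> C t -> (s.1 `<=` t.1 /\ s.2 `<=` t.2) \/ (t.1 `<=` s.1 /\ t.2 `<=` s.2)) ->
  subring_ideal (\bigcup_(s in C) s.1) (\bigcup_(s in C) s.2).
Proof.
move=> [s0 Cs0] sC totC.
have up s t : C s -> C t ->
    exists2 u, C u & [/\ s.1 `<=` u.1, s.2 `<=` u.2, t.1 `<=` u.1 & t.2 `<=` u.2].
  move=> Cs Ct; have [[st1 st2]|[ts1 ts2]] := totC s t Cs Ct.
    by exists t => //; split.
  by exists s => //; split.
split.
- by exists s0 => //; exact: (subring1 (sC _ Cs0)).
- move=> x y [s Cs sx] [t Ct ty]; have [u Cu [su1 _ tu1 _]] := up s t Cs Ct.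
  by exists u => //; exact: (subringD (sC _ Cu) (su1 _ sx) (tu1 _ ty)).
- by move=> x [s Cs sx]; exists s => //; exact: (subringN (sC _ Cs) sx).
- move=> x y [s Cs sx] [t Ct ty]; have [u Cu [su1 _ tu1 _]] := up s t Cs Ct.
  by exists u => //; exact: (subringM (sC _ Cu) (su1 _ sx) (tu1 _ ty)).
- by move=> x [s Cs sx]; exists s => //; exact: (ideal_sub (sC _ Cs) sx).
- by exists s0 => //; exact: (ideal0 (sC _ Cs0)).
- move=> x y [s Cs sx] [t Ct ty]; have [u Cu [_ su2 _ tu2]] := up s t Cs Ct.
  by exists u => //; exact: (idealD (sC _ Cu) (su2 _ sx) (tu2 _ ty)).
- move=> x y [s Cs sx] [t Ct ty]; have [u Cu [su1 _ _ tu2]] := up s t Cs Ct.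
  by exists u => //; exact: (idealMl (sC _ Cu) (su1 _ sx) (tu2 _ ty)).
- by move=> [s Cs s1]; exact: (ideal_proper (sC _ Cs) s1).
Qed.

Lemma exists_maximal_subring_ideal B0 M0 : subring_ideal B0 M0 ->
  exists B M, [/\ maximal_subring_ideal B M, B0 `<=` B & M0 `<=` M].
Proof.
move=> sBM0.
pose dominates (s t : set K * set K) := s.1 `<=` t.1 /\ s.2 `<=` t.2.
have dom_trans r s t : dominates r s -> dominates s t -> dominates r t.
  by move=> [rs1 rs2] [st1 st2]; split=> x ?; [apply: st1; apply: rs1 | apply: st2; apply: rs2].
pose T := {s | subring_ideal s.1 s.2 /\ dominates (B0, M0) s}.
pose R (s t : T) := `[< dominates (sval s) (sval t) >].
have t0 : T by exists (B0, M0); split=> //; split.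
have [||A totA|[[B M] [sBM domBM]] tmax] := @ZL_preorder T t0 R.
- by move=> s; apply/asboolP; split.
- by move=> r s t /asboolP rs /asboolP st; apply/asboolP; apply: dom_trans rs st.
- have [[s As]|A0] := pselect (A !=set0); last first.
    by exists t0 => s As; case: A0; exists s.
  pose C := sval @` A.
  have sC u : C u -> subring_ideal u.1 u.2 by move=> [v _ <-]; case: (svalP v).
  have totC u w : C u -> C w -> dominates u w \/ dominates w u.
    by move=> [u' Au <-] [w' Aw <-]; case: (totA u' w' Au Aw) => /asboolP; [left | right].
  have sU := subring_ideal_bigcup (ex_intro _ _ (imageP sval As)) sC totC.
  have domU : dominates (B0, M0) (\bigcup_(u in C) u.1, \bigcup_(u in C) u.2).
    have [_ [dom1 dom2]] := svalP s.
    by split=> x ?; exists (sval s); [apply: imageP | apply: dom1 | apply: imageP | apply: dom2].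
  exists (exist _ (_, _) (conj sU domU)) => v Av; apply/asboolP.
  by split=> x vx; exists (sval v) => //; apply: imageP.
- exists B, M; split; [split=> // B' M' sBM' BB' MM' | exact: domBM.1 | exact: domBM.2].
  have domBM' := dom_trans _ _ (B', M') domBM (conj BB' MM').
  by have /asboolP := tmax (exist _ (B', M') (conj sBM' domBM')) (asboolT (conj BB' MM')).
Qed.

Section Maximal.
Variables (B M : set K) (maxBM : maximal_subring_ideal B M).
Let sBM := maxBM.1.

Lemma maximal_adjoin y : B y \/ exists2 q, coef_in M q & q.[y] = 1.
Proof.
have [|My_proper] := pselect (exists2 q, coef_in M q & q.[y] = 1); first by right.
have proper q : coef_in M q -> q.[y] != 1.
  by move=> Mq; apply/eqP => qy1; apply: My_proper; exists q.
have [BB _] := maxBM.2 _ _ (subring_ideal_adjoin sBM proper)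
  (@subring_sub_adjoin _ _ sBM y) (@ideal_sub_adjoin _ _ sBM y).
by left; apply: BB; apply: (adjoin_subring_gen sBM).
Qed.

Lemma maximal_comaximal b : B b -> ~ M b -> exists m c, [/\ M m, B c & m + b * c = 1].
Proof.
move=> Bb nMb; apply: contrapT => no_one.
pose M' := [set x | exists m c, [/\ M m, B c & x = m + b * c]].
have MM' : M `<=` M'.
  by move=> m Mm; exists m, 0; rewrite mulr0 addr0; split=> //; apply: (subring0 sBM).
have sBM' : subring_ideal B M'.
  split; [exact: (subring1 sBM) | exact: (subringD sBM) | exact: (subringN sBM) |
          exact: (subringM sBM) | | | | | ].
  - move=> _ [m [c [Mm Bc ->]]]; apply: (subringD sBM); first exact: (ideal_sub sBM Mm).
    exact: (subringM sBM).
  - exact: (MM' _ (ideal0 sBM)).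
  - move=> _ _ [m [c [Mm Bc ->]]] [m' [c' [Mm' Bc' ->]]]; exists (m + m'), (c + c').
    by split; [apply: (idealD sBM) | apply: (subringD sBM) | ring].
  - move=> x _ Bx [m [c [Mm Bc ->]]]; exists (x * m), (x * c).
    by split; [apply: (idealMl sBM) | apply: (subringM sBM) | ring].
  - by move=> [m [c [Mm Bc /esym mbc1]]]; apply: no_one; exists m, c.
have [_ M'M] := maxBM.2 B M' sBM' (fun _ Bx => Bx) MM'.
apply: nMb; apply: M'M; exists 0, 1; rewrite add0r mulr1.
by split=> //; [apply: ideal0 sBM | apply: subring1 sBM].
Qed.

Lemma maximal_local b : B b -> ~ M b -> B b^-1.
Proof.
move=> Bb nMb; have [m [c [Mm Bc mbc1]]] := maximal_comaximal Bb nMb.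
set z := b * c; have zE : z = 1 - m by rewrite -mbc1 addrC addKr.
have z0 : z != 0 by rewrite zE subr_eq0 eq_sym; exact: (ideal_neq1 sBM Mm).
have c0 : c != 0 by apply: contraNneq z0 => c0; rewrite /z c0 mulr0.
have -> : b^-1 = c * z^-1 by rewrite /z invfM mulrCA divff ?mulr1.
apply: (subringM sBM) => //.
have [//|[q Mq qz1]] := maximal_adjoin z^-1; exfalso; apply: (ideal_proper sBM).
have Mzn : M (z ^+ size q).
  rewrite -[_ ^+ _]mulr1 -qz1 -horner_rev_poly //.
  apply: (ideal_horner sBM); first exact: (coef_in_rev_poly _ (ideal0 sBM) Mq).
  exact: (subringM sBM).
have Mzn1 : M (z ^+ size q - 1).
  apply: (idealXB1 sBM); first exact: (subringM sBM).
  by rewrite zE addrAC subrr add0r; apply: (idealN sBM Mm).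
by have := idealB sBM Mzn Mzn1; rewrite opprB addrC subrK.
Qed.

(* Chevalley's degree reduction: the top coefficient of q1 is cancelled by a
   multiple of X^n q2(1/X), which evaluates to y^n at y. *)
Lemma maximal_reduce y q1 q2 : y != 0 -> coef_in M q1 -> coef_in M q2 ->
    q1.[y] = 1 -> q2.[y^-1] = 1 -> (size q2 <= size q1)%N ->
  exists2 q, coef_in M q & q.[y] = 1 /\ (size q < size q1)%N.
Proof.
move=> y0 Mq1 Mq2 q1y q2y le_q21.
have q1_neq0 : q1 != 0 by apply: contra_eq_neq q1y => ->; rewrite horner0 eq_sym oner_eq0.
set n := (size q1).-1; have sq1 : size q1 = n.+1 by rewrite prednK ?size_poly_gt0.
pose r := rev_poly n q2.
have Mr : coef_in M r := coef_in_rev_poly _ (ideal0 sBM) Mq2.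
have ry : r.[y] = y ^+ n by rewrite horner_rev_poly ?q2y ?mulr1 // -sq1.
set u := 1 - r`_n.
have nMu : ~ M u.
  by move=> Mu; apply: (ideal_proper sBM); rewrite -(subrK r`_n 1); apply: (idealD sBM).
have Bu_inv : B u^-1.
  by apply: maximal_local nMu; apply: (subringB sBM (subring1 sBM) (ideal_sub sBM (Mr n))).
have u0 : u != 0 by apply: contra_not_neq nMu => ->; apply: (ideal0 sBM).
set a := q1`_n; have Ba : B a := ideal_sub sBM (Mq1 n).
exists (q1 - a *: 'X^n + (a / u) *: (r - r`_n *: 'X^n)); [move=> i | split].
- rewrite !(coefD, coefN, coefZ, coefXn); apply: (idealD sBM).
    by apply: (idealB sBM (Mq1 i)); apply: (idealMr sBM (Mq1 n) (subring_nat sBM _)).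
  apply: (idealMl sBM); first exact: (subringM sBM Ba Bu_inv).
  by apply: (idealB sBM (Mr i)); apply: (idealMr sBM (Mr n) (subring_nat sBM _)).
- by rewrite !(hornerD, hornerN, hornerZ, hornerXn) q1y ry /u; field.
- rewrite sq1 ltnS; apply/leq_sizeP => j le_nj.
  rewrite !(coefD, coefN, coefZ, coefXn).
  have [-> | neq_jn] := eqVneq j n; first by rewrite !mulr1 !subrr mulr0 addr0.
  have lt_nj : (n < j)%N by rewrite ltn_neqAle eq_sym neq_jn.
  by rewrite !mulr0 !subr0 coef_rev_poly leqNgt lt_nj nth_default ?sq1 // mulr0 addr0.
Qed.

Lemma maximal_not_both y q1 q2 : y != 0 -> coef_in M q1 -> coef_in M q2 ->
  q1.[y] = 1 -> q2.[y^-1] = 1 -> False.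
Proof.
have [N] := ubnP (size q1 + size q2).
elim: N y q1 q2 => // N IHN y q1 q2 ltN y0 Mq1 Mq2 q1y q2y.
have [le21 | lt12] := leqP (size q2) (size q1).
  have [q Mq [qy ltq]] := maximal_reduce y0 Mq1 Mq2 q1y q2y le21.
  by apply: (IHN y q q2) => //; lia.
have q1y' : q1.[y^-1^-1] = 1 by rewrite invrK.
have [q Mq [qy ltq]] := maximal_reduce (invr_neq0 y0) Mq2 Mq1 q2y q1y' (ltnW lt12).
by apply: (IHN y q1 q) => //; lia.
Qed.

Lemma maximal_total x : x != 0 -> B x \/ B x^-1.
Proof.
move=> x0; have [|[q1 Mq1 q1x]] := maximal_adjoin x; first by left.
have [|[q2 Mq2 q2x]] := maximal_adjoin x^-1; first by right.
by case: (maximal_not_both x0 Mq1 Mq2 q1x q2x).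
Qed.

End Maximal.

End SubringIdeal.

Section Absval.
Variables (K : fieldType) (R : realFieldType) (v : K -> R) (v_absval : is_absval v).

Lemma absval0 : v 0 = 0.
Proof. by case: v_absval => _ v_eq0 _ _ _; apply/v_eq0. Qed.

Lemma absvalM x y : v (x * y) = v x * v y.
Proof. by case: v_absval. Qed.

Lemma absval1 : v 1 = 1.
Proof.
case: v_absval => _ v_eq0 _ _ _.
have v10 : v 1 != 0 by apply/eqP => /v_eq0/eqP; rewrite oner_eq0.
by apply: (mulIf v10); rewrite -absvalM !mul1r.
Qed.

Lemma absvalX x n : v (x ^+ n) = v x ^+ n.
Proof. by elim: n => [|n IHn]; rewrite ?absval1 // !exprS absvalM IHn. Qed.

Lemma absvalN x : v (- x) = v x.
Proof.
case: v_absval => v_ge0 _ _ _ _.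
have : v (-1) ^+ 2 = 1 by rewrite -absvalX sqrrN expr1n absval1.
move/eqP; rewrite sqrf_eq1 => /orP[/eqP vN1 | /eqP vN1].
  by rewrite -mulN1r absvalM vN1 mul1r.
by have := v_ge0 (-1); rewrite vN1 oppr_ge0 ler10.
Qed.

Lemma absval_int_le1 : nonarchimedean v -> forall z : int, v z%:~R <= 1.
Proof.
move=> v_ultra; have v_nat n : v n%:R <= 1.
  elim: n => [|n IHn]; first by rewrite absval0 ler01.
  by rewrite -addn1 natrD (le_trans (v_ultra _ _)) // ge_max IHn absval1 lexx.
by case=> n; rewrite ?NegzE ?mulrNz ?absvalN v_nat.
Qed.

Lemma absval_root_le1 (f : {poly int}) b :
    nonarchimedean v -> (lead_coef f = 1 \/ lead_coef f = -1) ->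
  root (map_poly (fun a : int => a%:~R) f) b -> v b <= 1.
Proof.
move=> v_ultra lead_unit fb0; rewrite leNgt; apply/negP => vb_gt1.
have vb_gt0 : 0 < v b by apply: lt_trans vb_gt1.
have v_lead : v (lead_coef f)%:~R = 1.
  by case: lead_unit => ->; rewrite ?mulrNz ?absvalN absval1.
have f0 : f != 0 by rewrite -lead_coef_eq0; case: lead_unit => ->.
set d := (size f).-1; have sf : size f = d.+1 by rewrite prednK ?size_poly_gt0.
have sfK : size (map_poly (fun a : int => a%:~R) f : {poly K}) = d.+1.
  rewrite -sf size_map_poly_id0 //.
  by apply: contra_eq_neq v_lead => ->; rewrite absval0 eq_sym oner_eq0.
move: fb0; rewrite /root horner_coef sfK big_ord_recr /= coef_map /= -lead_coefE.
rewrite addrC addr_eq0 => /eqP lead_eq.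
suff : v ((lead_coef f)%:~R * b ^+ d) < v b ^+ d by rewrite absvalM v_lead mul1r absvalX ltxx.
rewrite lead_eq absvalN; apply: (big_ind (fun x => v x < v b ^+ d)).
- by rewrite absval0 exprn_gt0.
- by move=> x y vx vy; apply: le_lt_trans (v_ultra x y) _; rewrite gt_max vx vy.
move=> i _; rewrite absvalM absvalX coef_map /=.
apply: (@le_lt_trans _ _ (v b ^+ i)); last by rewrite ltr_eXn2l.
by apply: ler_piMl; [rewrite exprn_ge0 // ltW | apply: absval_int_le1].
Qed.

Lemma unstable_absval_gt1 b : b != 0 -> unstable v b -> 1 < v b.
Proof.
move=> b0 b_unstable; rewrite ltNge; apply/negP => vb_le1.
have [N /(_ N (leqnn N)) vbN_lt1] := b_unstable 1 ltr01.
have vbN_ge0 : 0 <= v (b ^- N) by case: v_absval.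
have : v (b ^- N) * v (b ^+ N) = 1 by rewrite -absvalM mulVf ?absval1 ?expf_neq0.
apply/eqP; rewrite lt_eqF // (le_lt_trans _ vbN_lt1) // ler_piMr // absvalX exprn_ile1 //.
by case: v_absval.
Qed.

End Absval.

Lemma alg_natr_eq0 (K : fieldExtType rat) n : ((n%:R : K) == 0) = (n == 0%N).
Proof. by rewrite -(rmorph_nat (in_alg K)) fmorph_eq0 pnatr_eq0. Qed.

Lemma alg_intr_eq0 (K : fieldExtType rat) (z : int) : ((z%:~R : K) == 0) = (z == 0).
Proof. by rewrite -(rmorph_int (in_alg K)) fmorph_eq0 intr_eq0. Qed.

Section RankOne.
Variables (K : fieldExtType rat) (B M : set K) (P : nat).
Hypotheses (sBM : subring_ideal B M) (P_prime : prime P) (MP : M P%:R).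
Hypotheses (B_local : forall b, B b -> ~ M b -> B b^-1)
  (B_total : forall x, x != 0 -> B x \/ B x^-1).
Local Notation p := (P%:R : K).
Implicit Types (x y : K) (e : int).

Lemma p_neq0 : p != 0.
Proof. by rewrite alg_natr_eq0 -lt0n prime_gt0. Qed.

Lemma pexpz_neq0 e : p ^ e != 0.
Proof. by rewrite expfz_neq0 // p_neq0. Qed.

Definition vunit x := [/\ x != 0, B x & B x^-1].

Lemma vunit1 : vunit 1.
Proof. by split; rewrite ?oner_eq0 ?invr1 //; apply: (subring1 sBM). Qed.

Lemma vunitM x y : vunit x -> vunit y -> vunit (x * y).
Proof.
move=> [x0 Bx Bxi] [y0 By Byi]; split; first by rewrite mulf_neq0.
  exact: (subringM sBM).
by rewrite invfM; apply: (subringM sBM).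
Qed.

Lemma vunitV x : vunit x -> vunit x^-1.
Proof. by move=> [x0 Bx Bxi]; split; rewrite ?invr_eq0 ?invrK. Qed.

Lemma vunitX x n : vunit x -> vunit (x ^+ n).
Proof. by move=> Ux; elim: n => [|n IHn]; [apply: vunit1 | rewrite exprS; apply: vunitM]. Qed.

Lemma vunitN x : vunit x -> vunit (- x).
Proof.
move=> Ux; rewrite -mulN1r; apply: vunitM Ux.
by split; rewrite ?oppr_eq0 ?oner_eq0 ?invrN ?invr1 //;
  apply: (subringN sBM); apply: (subring1 sBM).
Qed.

Lemma vunit_notin_ideal x : vunit x -> ~ M x.
Proof.
move=> [x0 _ Bxi] Mx; apply: (ideal_proper sBM).
by rewrite -(divff x0); apply: (idealMr sBM).
Qed.

Lemma vunit_pexpz e : vunit (p ^ e) -> e = 0.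
Proof.
have Mp n : ~ vunit (p ^+ n.+1).
  move/vunit_notin_ideal; apply; rewrite exprS.
  by apply: (idealMr sBM MP); apply: (subringX sBM); apply: (ideal_sub sBM MP).
case: e => [[|n] | n] //= Ue; first by case: (Mp n).
by case: (Mp n); rewrite -[p ^+ _]invrK; apply: vunitV.
Qed.

Lemma vunit_coprime n : (0 < n)%N -> coprime P n -> vunit n%:R.
Proof.
move=> n0 cPn; have Bn := subring_nat sBM n.
have nMn : ~ M n%:R.
  move=> Mn; apply: (ideal_proper sBM).
  have := coprimeP P n0; rewrite coprime_sym cPn => /(_ isT) [[a b] /= abE].
  have /(congr1 (fun m => m%:R : K)) : (a * n = 1 + b * P)%N by lia.
  rewrite /= natrD !natrM => abK.
  have -> : (1 : K) = a%:R * n%:R - b%:R * p by rewrite abK addrK.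
  by apply: (idealB sBM); apply: (idealMl sBM) => //; apply: (subring_nat sBM).
split=> //; last exact: B_local.
by rewrite alg_natr_eq0 -lt0n.
Qed.

Lemma vunit_nat n : (0 < n)%N -> exists e, vunit (n%:R / p ^ e).
Proof.
move=> n0; have [m cPm nE] := pfactor_coprime P_prime n0.
have m0 : (0 < m)%N by move: n0; rewrite nE muln_gt0 => /andP[].
exists (logn P n); rewrite [in n%:R]nE natrM natrX -exprnP mulfK ?expf_neq0 ?p_neq0 //.
exact: vunit_coprime.
Qed.

Lemma vunit_int (z : int) : z != 0 -> exists e, vunit (z%:~R / p ^ e).
Proof.
case: z => n z0; first by apply: vunit_nat; rewrite lt0n; apply: contraNneq z0 => ->.
have [e Ue] := vunit_nat (ltn0Sn n); exists e.
by rewrite NegzE mulrNz mulNr; apply: vunitN.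
Qed.

Lemma vunit_rat (c : rat) : c != 0 -> exists e, vunit (c%:A / p ^ e).
Proof.
move=> c0; have cE : c%:A = (numq c)%:~R / (denq c)%:~R :> K.
  by rewrite -{1}(divq_num_den c) [LHS](fmorph_div (in_alg K)) !rmorph_int.
have [e1 U1] : exists e, vunit ((numq c)%:~R / p ^ e) by apply: vunit_int; rewrite numq_eq0.
have [e2 U2] := vunit_int (denq_neq0 c).
exists (e1 - e2).
have -> : c%:A / p ^ (e1 - e2) = (numq c)%:~R / p ^ e1 * ((denq c)%:~R / p ^ e2)^-1.
  rewrite cE expfzDr ?p_neq0 // -invr_expz; field.
  by rewrite !pexpz_neq0 alg_intr_eq0 denq_neq0.
exact: (vunitM U1 (vunitV U2)).
Qed.

Definition vdvd x y := exists2 c, B c & y = c * x.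

Lemma vdvd_refl x : vdvd x x.
Proof. by exists 1; rewrite ?mul1r //; apply: (subring1 sBM). Qed.

Lemma vdvd_trans x y z : vdvd x y -> vdvd y z -> vdvd x z.
Proof. by move=> [c Bc ->] [d Bd ->]; exists (d * c); rewrite ?mulrA //; apply: (subringM sBM). Qed.

Lemma vdvd_total x y : vdvd x y \/ vdvd y x.
Proof.
have [->|x0] := eqVneq x 0; first by right; exists 0; rewrite ?mul0r //; apply: (subring0 sBM).
have [->|y0] := eqVneq y 0; first by left; exists 0; rewrite ?mul0r //; apply: (subring0 sBM).
have [Byx|Bxy] := B_total (mulf_neq0 y0 (invr_neq0 x0)).
  by left; exists (y / x); rewrite ?divfK.
by right; exists (x / y); rewrite ?divfK // -invf_div.
Qed.

Lemma exists_vdvd_min (I : eqType) (t : I -> K) (s : seq I) : s != [::] ->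
  exists2 i, i \in s & forall j, j \in s -> vdvd (t i) (t j).
Proof.
elim: s => // a s IHs _; have [->|s_neq0] := eqVneq s [::].
  by exists a; rewrite ?mem_head // => j; rewrite inE => /eqP ->; apply: vdvd_refl.
have [i si min_i] := IHs s_neq0.
have [ai|ia] := vdvd_total (t a) (t i).
  exists a; first exact: mem_head.
  move=> j; rewrite inE => /predU1P[-> | sj]; first exact: vdvd_refl.
  exact: vdvd_trans ai (min_i j sj).
exists i; first by rewrite inE si orbT.
by move=> j; rewrite inE => /predU1P[-> | /min_i].
Qed.

(* Divide by a term of least value: if all the other quotients lay in M, then
   so would 1. *)
Lemma vunit_ratio_of_sum_eq0 n (t : 'I_n -> K) k : t k != 0 -> \sum_i t i = 0 ->
  exists i j : 'I_n, (i < j)%N /\ vunit (t j / t i).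
Proof.
move=> tk0 sum0.
have [|i _ min_i] := @exists_vdvd_min _ t (enum 'I_n).
  by apply: contraTneq (mem_enum predT k) => ->.
have {}min_i j : vdvd (t i) (t j) by apply/min_i/mem_enum.
have ti0 : t i != 0.
  by have [c _ tkE] := min_i k; apply: contraNneq tk0 => ti0; rewrite tkE ti0 mulr0.
pose c j := t j / t i.
have Bc j : B (c j) by have [d Bd tjE] := min_i j; rewrite /c tjE mulfK.
have [j [neq_ji nMcj]] : exists j, j != i /\ ~ M (c j).
  apply: contrapT => allM; apply: (ideal_proper sBM).
  have : \sum_j c j = 0 by rewrite -mulr_suml sum0 mul0r.
  rewrite (bigD1 i) //= /c divff // => /eqP; rewrite addr_eq0 => /eqP ->.
  apply: (idealN sBM); apply: (ideal_sum sBM) => j neq_ji.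
  by apply: contrapT => nMcj; apply: allM; exists j.
have Ucj : vunit (c j).
  split; [apply: contra_not_neq nMcj => ->; apply: (ideal0 sBM) | apply: Bc |].
  exact: B_local.
have [lt_ij|lt_ji] : (i < j)%N \/ (j < i)%N.
  by move: neq_ji; rewrite neq_ltn => /orP[]; [right | left].
  by exists i, j.
by exists j, i; split=> //; rewrite -invf_div; apply: vunitV.
Qed.

(* Two monomials of the minimal polynomial of x over Q have the same value. *)
Lemma exists_vunit_pow x : x != 0 ->
  exists k e, (0 < k <= \dim {:K})%N /\ vunit (x ^+ k / p ^ e).
Proof.
move=> x0; have /polyOver1P[q qE] := minPolyOver 1 x.
have sq : size q = (adjoin_degree 1 x).+1.
  by rewrite -(size_map_poly (in_alg K)) -qE size_minPoly.
have le_dim : (adjoin_degree 1 x <= \dim {:K})%N.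
  by have := dim_Fadjoin 1%AS x; rewrite dimv1 muln1 => <-; apply: dimvS (subvf _).
pose t (i : 'I_(size q)) := (map_poly (in_alg K) q)`_i * x ^+ i.
have sum0 : \sum_i t i = 0.
  by rewrite -[RHS](minPolyxx 1 x) qE horner_coef size_map_poly.
have tq0 (i : 'I_(size q)) : (t i != 0) = (q`_i != 0).
  by rewrite /t coef_map mulf_eq0 expf_eq0 (negbTE x0) andbF orbF scaler_eq0 oner_eq0 orbF.
have lt_lead : ((size q).-1 < size q)%N by rewrite sq.
have [|i [j [lt_ij Uij]]] := @vunit_ratio_of_sum_eq0 _ t (Ordinal lt_lead) _ sum0.
  by rewrite tq0 -lead_coefE lead_coef_eq0 -size_poly_gt0 sq.
have [tji0 _ _] := Uij; move: tji0; rewrite mulf_eq0 invr_eq0 negb_or => /andP[tj0 ti0].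
have qij0 : q`_i / q`_j != 0 by rewrite mulf_neq0 ?invr_eq0 -?tq0.
have [e Ue] := vunit_rat qij0; exists (j - i)%N, e; split.
  move: (ltn_ord j) lt_ij le_dim sq; move: (nat_of_ord i) (nat_of_ord j) => a b.
  by move: (size q) => n; lia.
have algV (a b : rat) : (a / b)%:A = a%:A / b%:A :> K := fmorph_div (in_alg K) a b.
have -> : x ^+ (j - i) / p ^ e = t j / t i * ((q`_i / q`_j)%:A / p ^ e).
  rewrite /t !coef_map /= algV -[in x ^+ j](subnK (ltnW lt_ij)) exprD; field.
  by rewrite pexpz_neq0 expf_neq0 // !scaler_eq0 oner_eq0 !orbF -!tq0 ti0 tj0.
exact: (vunitM Uij Ue).
Qed.

Let D := (\dim {:K})`!.

Lemma exists_vunit_fact_pow x : x != 0 -> exists e, vunit (x ^+ D / p ^ e).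
Proof.
move=> x0; have [k [e [/andP[k0 le_kdim] Uk]]] := exists_vunit_pow x0.
have kD : (k %| D)%N by rewrite dvdn_fact ?k0.
exists (e * (D %/ k)%N).
have -> : x ^+ D / p ^ (e * (D %/ k)%N) = (x ^+ k / p ^ e) ^+ (D %/ k).
  by rewrite exprMn exprVn -exprM mulnC divnK // exprnP exprz_exp.
exact: vunitX.
Qed.

(* ord 0 is a junk value; vabs treats 0 separately. *)
Definition ord x : int := xget 0 [set e | vunit (x ^+ D / p ^ e)].

Lemma ordP x : x != 0 -> vunit (x ^+ D / p ^ ord x).
Proof. by move=> x0; apply: (xgetPex 0 (exists_vunit_fact_pow x0)). Qed.

Lemma vunit_pexpz_uniq y e1 e2 : vunit (y / p ^ e1) -> vunit (y / p ^ e2) -> e1 = e2.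
Proof.
move=> U1 U2; apply/eqP; rewrite -subr_eq0; apply/eqP/vunit_pexpz.
have [y1 _ _] := U1; have y0 : y != 0 by apply: contraNneq y1 => ->; rewrite mul0r.
have -> : p ^ (e1 - e2) = (y / p ^ e2) / (y / p ^ e1).
  by rewrite expfzDr ?p_neq0 // -invr_expz; field; rewrite y0 !pexpz_neq0.
exact: (vunitM U2 (vunitV U1)).
Qed.

Lemma ord_eq x e : x != 0 -> vunit (x ^+ D / p ^ e) -> ord x = e.
Proof. by move=> x0; apply: vunit_pexpz_uniq (ordP x0). Qed.

Lemma ordM x y : x != 0 -> y != 0 -> ord (x * y) = ord x + ord y.
Proof.
move=> x0 y0; apply: ord_eq; first exact: mulf_neq0.
have -> : (x * y) ^+ D / p ^ (ord x + ord y) = (x ^+ D / p ^ ord x) * (y ^+ D / p ^ ord y).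
  by rewrite exprMn expfzDr ?p_neq0 // invfM mulrACA.
exact: (vunitM (ordP x0) (ordP y0)).
Qed.

Lemma ord1 : ord 1 = 0.
Proof. by apply: ord_eq; rewrite ?oner_eq0 // expr1n expr0z divr1; apply: vunit1. Qed.

Lemma pexpz_subring_ge0 e : B (p ^ e) -> 0 <= e.
Proof.
case: e => [//|n] /= Bpn; exfalso; apply: (ideal_proper sBM).
have -> : 1 = p * ((p ^+ n.+1)^-1 * p ^+ n).
  by rewrite exprS invfM -!mulrA mulVf ?expf_neq0 ?p_neq0 // mulr1 mulfV ?p_neq0.
apply: (idealMr sBM); first exact: MP.
apply: (subringM sBM Bpn).
by apply: (subringX sBM); apply: (ideal_sub sBM MP).
Qed.

Lemma ord_le x y : x != 0 -> y != 0 -> B (y / x) -> ord x <= ord y.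
Proof.
move=> x0 y0 Byx; rewrite -subr_ge0; apply: pexpz_subring_ge0.
have [_ Bx _] := ordP x0; have [_ _ By] := ordP y0.
have -> : p ^ (ord y - ord x) = (y / x) ^+ D * (y ^+ D / p ^ ord y)^-1 * (x ^+ D / p ^ ord x).
  rewrite expfzDr ?p_neq0 // -invr_expz expr_div_n.
  have := pexpz_neq0 (ord y); have := pexpz_neq0 (ord x).
  have := expf_neq0 D y0; have := expf_neq0 D x0.
  move: (y ^+ D) (x ^+ D) (p ^ ord y) (p ^ ord x) => a b u w b0 a0 w0 u0.
  by field; rewrite w0 u0 a0 b0.
by move: (subringM sBM (subringM sBM (subringX sBM D Byx) By) Bx).
Qed.

Lemma ord_gt0 m : M m -> m != 0 -> 0 < ord m.
Proof.
move=> Mm m0; rewrite ltNge; apply/negP => ord_le0.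
apply: vunit_notin_ideal (ordP m0) _; rewrite invr_expz.
have : 0 <= - ord m by rewrite oppr_ge0.
case: (- ord m) => // n _ /=; apply: (idealMr sBM).
  rewrite -(prednK (fact_gt0 _ : (0 < D)%N)) exprS; apply: (idealMr sBM Mm).
  by apply: (subringX sBM); apply: (ideal_sub sBM Mm).
by apply: (subringX sBM); apply: (ideal_sub sBM MP).
Qed.

Definition vabs x : rat := if x == 0 then 0 else 2 ^ (- ord x).

Lemma vabs0 : vabs 0 = 0. Proof. by rewrite /vabs eqxx. Qed.

Lemma vabs_ge0 x : 0 <= vabs x.
Proof. by rewrite /vabs; case: eqP => // _; apply: exprz_ge0. Qed.

Lemma vabs_eq0 x : vabs x = 0 <-> x = 0.
Proof.
rewrite /vabs; case: eqP => // x0; split=> // /eqP.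
by rewrite expfz_eq0 andbF.
Qed.

Lemma vabsM x y : vabs (x * y) = vabs x * vabs y.
Proof.
rewrite /vabs; have [->|x0] := eqVneq x 0; first by rewrite mul0r eqxx mul0r.
have [->|y0] := eqVneq y 0; first by rewrite mulr0 eqxx mulr0.
by rewrite mulf_eq0 (negbTE x0) (negbTE y0) ordM // opprD expfzDr.
Qed.

Lemma vabs_le x y : x != 0 -> y != 0 -> B (y / x) -> vabs y <= vabs x.
Proof.
move=> x0 y0 Byx; rewrite /vabs (negbTE x0) (negbTE y0).
by apply: ler_weXz2l => //; rewrite lerN2; apply: ord_le.
Qed.

Lemma vabs_nonarchimedean : nonarchimedean vabs.
Proof.
move=> x y.
have [->|x0] := eqVneq x 0; first by rewrite add0r le_max lexx orbT.
have [->|y0] := eqVneq y 0; first by rewrite addr0 le_max lexx.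
have [->|xy0] := eqVneq (x + y) 0; first by rewrite vabs0 le_max vabs_ge0.
rewrite le_max; have [Byx|Bxy] := B_total (mulf_neq0 y0 (invr_neq0 x0)).
  apply/orP; left; apply: vabs_le => //.
  by rewrite mulrDl divff // addrC; apply: (subringD sBM Byx); apply: (subring1 sBM).
rewrite invf_div in Bxy; apply/orP; right; apply: vabs_le => //.
by rewrite mulrDl divff //; apply: (subringD sBM Bxy); apply: (subring1 sBM).
Qed.

Lemma vabs_le_half g : M g -> g != 0 -> vabs g <= 2^-1.
Proof.
move=> Mg g0; rewrite /vabs (negbTE g0) -[2^-1]/(2 ^ (-1)).
by apply: ler_weXz2l => //; rewrite lerN2; apply: ord_gt0.
Qed.

Lemma vabs_is_absval : is_absval vabs.
Proof.
split; [exact: vabs_ge0 | exact: vabs_eq0 | exact: vabsM | | ].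
  move=> x y; apply: le_trans (vabs_nonarchimedean x y) _.
  by rewrite ge_max lerDl lerDr !vabs_ge0.
exists p; split; first exact: p_neq0.
by apply: contraTneq (vabs_le_half MP p_neq0) => ->; rewrite -ltNge invf_lt1.
Qed.

Lemma vabs_unstable g : M g -> g != 0 -> unstable vabs g^-1.
Proof.
move=> Mg g0 e e0; exists (Num.bound e^-1) => m le_Nm.
rewrite -exprVn invrK (absvalX vabs_is_absval); apply: (@le_lt_trans _ _ ((2^-1) ^+ m)).
  by rewrite lerXn2r ?nnegrE ?vabs_ge0 ?invr_ge0 ?vabs_le_half.
rewrite exprVn -[e]invrK ltf_pV2 ?posrE ?invr_gt0 ?exprn_gt0 //.
have ei0 : 0 <= e^-1 by rewrite invr_ge0 ltW.
apply: lt_le_trans (archi_boundP ei0) _.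
by rewrite -natrX ler_nat (leq_trans le_Nm) // ltnW // ltn_expl.
Qed.

End RankOne.

Section InitialPair.
Variables (K : fieldExtType rat) (f : {poly int}) (beta : K) (P : nat).
Hypotheses (P_prime : prime P) (f_prim : zcontents f = 1)
  (f_irr : irreducible_poly (map_poly (fun a : int => a%:~R) f : {poly rat}))
  (f_beta : root (map_poly (fun a : int => a%:~R) f) beta) (beta0 : beta != 0)
  (P_lead : (P%:Z %| lead_coef f)%Z).

Lemma map_poly_intr_alg (g : {poly int}) :
  map_poly (in_alg K) (map_poly intr g) = map_poly intr g.
Proof. by rewrite -map_poly_comp; apply: eq_map_poly => z /=; apply: (rmorph_int (in_alg K)). Qed.

Lemma root_dvdp_int (h : {poly int}) : root (map_poly intr h) beta -> (f %| h)%R.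
Proof.
move=> h_beta; rewrite -dvdp_rat_int; apply: contraLR h_beta.
rewrite -(irreducible_poly_coprime _ f_irr) -(coprimep_map (in_alg K)) !map_poly_intr_alg.
by move/coprimep_root => /(_ _ f_beta); rewrite /root.
Qed.

Lemma rev_root_neq1 (q : {poly int}) : (P%:Z %| q`_0)%Z -> (map_poly intr q).[beta^-1] != 1.
Proof.
move=> P_q0; apply/eqP => q_beta1.
have q0 : q != 0 by apply: contra_eq_neq q_beta1 => ->; rewrite rmorph0 horner0 eq_sym oner_eq0.
set n := (size q).-1; have sq : size q = n.+1 by rewrite prednK ?size_poly_gt0.
pose H := rev_poly n q - 'X^n.
have H_beta : root (map_poly intr H) beta.
  rewrite /root rmorphB /= map_polyXn map_rev_poly hornerD hornerN hornerXn.
  rewrite horner_rev_poly // ?q_beta1 ?mulr1 ?subrr //.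
  by rewrite size_map_poly_id0 ?sq // alg_intr_eq0 lead_coef_eq0.
have Hn : H`_n = q`_0 - 1 by rewrite coefB coef_rev_poly leqnn subnn coefXn eqxx.
have P_not1 : ~~ (P%:Z %| 1)%Z by rewrite dvdzE /= dvdn1; case: eqP P_prime => // ->.
have Hn0 : H`_n != 0.
  by rewrite Hn subr_eq0; apply: contraNneq P_not1 => q01; move: P_q0; rewrite q01.
have sH : size H = n.+1.
  apply/eqP; rewrite eqn_leq; apply/andP; split.
    apply/leq_sizeP => j lt_nj.
    by rewrite coefB coef_rev_poly coefXn leqNgt lt_nj (gtn_eqF lt_nj) subr0.
  by rewrite ltnNge; apply/negP => /leq_sizeP/(_ n (leqnn n))/eqP; rewrite (negbTE Hn0).
have [r Hr] := dvdpP_int (root_dvdp_int H_beta).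
have zf : zprimitive f = f by rewrite {2}[f]zpolyEprim f_prim scale1r.
have lead_H : lead_coef H = H`_n by rewrite lead_coefE sH.
have P_H : (P%:Z %| q`_0 - 1)%Z by rewrite -Hn -lead_H Hr zf lead_coefM dvdz_mulr.
by move: P_not1; have := rpredB P_q0 P_H; rewrite opprB addrC subrK => ->.
Qed.

Definition int_adjoin : set K := [set z | exists q : {poly int}, z = (map_poly intr q).[beta^-1]].
Definition int_adjoin_ideal : set K :=
  [set z | exists2 q : {poly int}, (P%:Z %| q`_0)%Z & z = (map_poly intr q).[beta^-1]].

Lemma subring_ideal_int_adjoin : subring_ideal int_adjoin int_adjoin_ideal.
Proof.
split.
- by exists 1; rewrite rmorph1 hornerC.
- by move=> _ _ [q1 ->] [q2 ->]; exists (q1 + q2); rewrite rmorphD hornerD.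
- by move=> _ [q ->]; exists (- q); rewrite rmorphN hornerN.
- by move=> _ _ [q1 ->] [q2 ->]; exists (q1 * q2); rewrite rmorphM hornerM.
- by move=> _ [q _ ->]; exists q.
- by exists 0; rewrite ?coef0 ?dvdz0 // rmorph0 horner0.
- move=> _ _ [q1 P_q1 ->] [q2 P_q2 ->]; exists (q1 + q2); last by rewrite rmorphD hornerD.
  by rewrite coefD rpredD.
- move=> _ _ [q1 ->] [q2 P_q2 ->]; exists (q1 * q2); last by rewrite rmorphM hornerM.
  by rewrite coef0M dvdz_mull.
- by move=> [q P_q0 /esym/eqP]; apply/negP/rev_root_neq1.
Qed.

Lemma int_adjoin_ideal_P : int_adjoin_ideal P%:R.
Proof. by exists P%:Z%:P; rewrite ?coefC // map_polyC hornerC. Qed.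

Lemma int_adjoin_ideal_inv : int_adjoin_ideal beta^-1.
Proof. by exists 'X; rewrite ?coefX ?dvdz0 // map_polyX hornerX. Qed.

End InitialPair.

Lemma exists_absval_unstable (K : fieldExtType rat) (P : nat) (B0 M0 : set K) (g : K) :
    prime P -> subring_ideal B0 M0 -> M0 P%:R -> M0 g -> g != 0 ->
  exists v : K -> rat, [/\ is_absval v, nonarchimedean v & unstable v g^-1].
Proof.
move=> P_prime sBM0 M0P M0g g0.
have [B [M [maxBM _ M0M]]] := exists_maximal_subring_ideal sBM0.
have B_local := maximal_local maxBM; have B_total := maximal_total maxBM.
have [sBM _] := maxBM; have MP := M0M _ M0P.
exists (vabs B P); split.
- exact: vabs_is_absval sBM P_prime MP B_local B_total.
- exact: vabs_nonarchimedean sBM P_prime MP B_local B_total.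
- exact: vabs_unstable sBM P_prime MP B_local B_total _ (M0M _ M0g) g0.
Qed.

Unset Implicit Arguments.

Theorem mainTheorem13 (f : {poly int}) (K : fieldExtType rat) (beta : K) :
  associated_poly f ->
  irreducible_poly (map_poly (fun a : int => a%:~R) f : {poly rat}) ->
  (<<1%VS; beta>>%VS = fullv) ->
  root (map_poly (fun a : int => a%:~R) f) beta ->
  (lead_coef f = 1 \/ lead_coef f = -1) <->
  (forall (R : archiFieldType) (v : K -> R),
      is_absval v -> unstable v beta -> archimedean_place v).
Proof.
move=> [f_prim f0 lead_gt0 _] f_irr _ f_beta.
have beta0 : beta != 0.
  by apply: contraTneq f_beta => ->; rewrite /root horner_coef0 coef_map /= alg_intr_eq0.
split=> [lead_unit R v v_absval beta_unstable v_nonarch | all_arch].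
  have := absval_root_le1 v_absval v_nonarch lead_unit f_beta.
  by rewrite leNgt unstable_absval_gt1.
apply: contrapT => lead_nonunit.
have lead_gt1 : (1 < `|lead_coef f|)%N.
  move: lead_gt0 lead_nonunit; case: (lead_coef f) => [[|[|n]]|n] //= _.
  by case; left.
have P_prime := pdiv_prime lead_gt1.
have P_lead : ((pdiv `|lead_coef f|)%:Z %| lead_coef f)%Z by rewrite dvdzE pdiv_dvd.
have [v [v_absval v_nonarch]] := exists_absval_unstable P_prime
  (subring_ideal_int_adjoin P_prime f_prim f_irr f_beta beta0 P_lead)
  (int_adjoin_ideal_P _ _) (int_adjoin_ideal_inv _ _) (invr_neq0 beta0).
by rewrite invrK => /(all_arch _ v v_absval); apply.
Qed.
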